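(* Let $P$ be a Poisson conformal algebra with $\lambda$-products $(\cdot_\lambda\cdot)$ and $[\cdot_\lambda\cdot]$, and let $L\subseteq P$ be an $H$-submodule closed under $[\cdot_\lambda\cdot]$ (so $L$ is a Lie conformal algebra). Then $P$ is a conformal module over $L$ with respect to $$\langle a_\lambda u\rangle=[a_\lambda u]+\lambda(a_\lambda u),\qquad a\in L,\ u\in P.$$
   Context: $\Bbbk$ is a field of characteristic $0$, $H=\Bbbk[\partial]$. A $\lambda$-product on an $H$-module $C$ is a $\Bbbk$-bilinear map $(x,y)\mapsto(x_\lambda y)=\sum_{n\ge0}\frac{\lambda^n}{n!}(x_{(n)}y)\in C[\lambda]$ satisfying $(\partial x_\lambda y)=-\lambda(x_\lambda y)$, $(x_\lambda\partial y)=(\partial+\lambda)(x_\lambda y)$; $(x_{-\partial-\lambda}y)$ means $\sum_n\frac{(-\partial-\lambda)^n}{n!}(x_{(n)}y)$ with $\partial$ acting on coefficients. A Poisson conformal algebra is an $H$-module $P$ with two $\lambda$-products such that $(\cdot_\lambda\cdot)$ is associative, $(x_\lambda(y_\mu z))=((x_\lambda y)_{\lambda+\mu}z)$, and commutative, $(x_\lambda y)=(y_{-\partial-\lambda}x)$; $[\cdot_\lambda\cdot]$ satisfies $[x_\lambda y]=-[y_{-\partial-\lambda}x]$ and $[x_\lambda[y_\mu z]]-[y_\mu[x_\lambda z]]=[[x_\lambda y]_{\lambda+\mu}z]$; and $[x_\lambda(y_\mu z)]=([x_\lambda y]_{\lambda+\mu}z)+(y_\mu[x_\lambda z])$ for all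 $x,y,z$. A conformal module over a Lie conformal algebra $L$ is an $H$-module $M$ with a $\Bbbk$-bilinear map $L\times M\to M[\lambda]$, $(a,u)\mapsto\langle a_\lambda u\rangle$, such that $\langle\partial a_\lambda u\rangle=-\lambda\langle a_\lambda u\rangle$, $\langle a_\lambda\partial u\rangle=(\partial+\lambda)\langle a_\lambda u\rangle$, and $\langle a_\lambda\langle b_\mu u\rangle\rangle-\langle b_\mu\langle a_\lambda u\rangle\rangle=\langle[a_\lambda b]_{\lambda+\mu}u\rangle$ for all $a,b\in L$, $u\in M$. *)

From HB Require Import structures.
From mathcomp Require Import all_boot all_order all_algebra.
Set Implicit Arguments. Unset Strict Implicit. Unset Printing Implicit Defensive.
Import Order.TTheory GRing.Theory Num.Theory.
Local Open Scope ring_scope.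

(* An H-module (H = k[d]) is a k-vector space V with a k-linear map d : V -> V.
   A polynomial in C[lambda] is a coefficient list s : seq V; the coefficient of
   lambda^n is s`_n (= nth 0 s n); trailing zeros are irrelevant, equality of
   polynomials is [peq].  A lambda-product is a map V -> V -> seq V giving the
   coefficients of (x_lambda y) = sum_n lambda^n (x_lambda y)`_n
   (so (x_lambda y)`_n = x_(n) y / n! in the paper's notation).
   A polynomial in C[lambda,mu] is a coefficient function nat -> nat -> V,
   F i j = coefficient of lambda^i mu^j. *)

Section Defs.
Variable k : fieldType.
Variable V : lmodType k.

Definition coef (s : seq V) (n : nat) : V := nth 0 s n.

Definition peq (s t : seq V) : Prop := forall n, coef s n = coef t n.

Definition padd (s t : seq V) : seq V :=
  mkseq (fun n => coef s n + coef t n) (maxn (size s) (size t)).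
Definition pscale (a : k) (s : seq V) : seq V := map (fun v => a *: v) s.
Definition popp (s : seq V) : seq V := map (fun v => - v) s.
Definition plam (s : seq V) : seq V := 0 :: s.
(* action of (d + lambda) on V[lambda]; d acts on coefficients *)
Definition pdlam (d : V -> V) (s : seq V) : seq V := padd (map d s) (plam s).
(* p(-d-lambda) = sum_n (-d-lambda)^n s_n, computed by Horner's scheme *)
Definition subst_neg (d : V -> V) (s : seq V) : seq V :=
  foldr (fun c acc => padd [:: c] (popp (pdlam d acc))) [::] s.

Definition Hmod (d : V -> V) : Prop :=
  forall (a : k) (x y : V), d (a *: x + y) = a *: d x + d y.

Definition lambda_product (d : V -> V) (P : V -> V -> seq V) : Prop :=
  [/\ (forall a x y z, peq (P (a *: x + y) z) (padd (pscale a (P x z)) (P y z))),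
      (forall a x y z, peq (P z (a *: x + y)) (padd (pscale a (P z x)) (P z y))),
      (forall x y, peq (P (d x) y) (popp (plam (P x y)))) &
      (forall x y, peq (P x (d y)) (pdlam d (P x y)))].

(* p(lambda+mu) for p in V[nu]: coefficient of lambda^i mu^j *)
Definition subst_sum (s : seq V) (i j : nat) : V :=
  'C(i + j, i)%:R *: coef s (i + j).

(* (x_lambda (y_mu z)) for products P (outer) and Q (inner):
   coefficient of lambda^i mu^j *)
Definition inner (P Q : V -> V -> seq V) (x y z : V) (i j : nat) : V :=
  coef (P x (coef (Q y z) j)) i.
(* (y_mu (x_lambda z)) for products P (outer) and Q (inner) *)
Definition inner_swap (P Q : V -> V -> seq V) (y x z : V) (i j : nat) : V :=
  coef (P y (coef (Q x z) i)) j.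
(* ((x_lambda y)_{lambda+mu} z), inner product P, outer product Q:
   = sum_n lambda^n ((x_lambda y)`_n _{lambda+mu} z) *)
Definition comp (P Q : V -> V -> seq V) (x y z : V) (i j : nat) : V :=
  \sum_(n < size (P x y))
     (if (n <= i)%N then subst_sum (Q (coef (P x y) n) z) (i - n) j else 0).

Definition poisson_conformal (d : V -> V) (prod br : V -> V -> seq V) : Prop :=
  [/\ Hmod d, lambda_product d prod, lambda_product d br,
      [/\ (* associativity *)
      (forall x y z i j, inner prod prod x y z i j = comp prod prod x y z i j),
      (* commutativity *)
      (forall x y, peq (prod x y) (subst_neg d (prod y x))) &
      (* skew-symmetry *)
      (forall x y, peq (br x y) (popp (subst_neg d (br y x))))] &
    [/\
      (* Jacobi identity *)
      (forall x y z i j,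
          inner br br x y z i j - inner_swap br br y x z i j = comp br br x y z i j) &
      (* Leibniz rule *)
      (forall x y z i j,
          inner br prod x y z i j
          = comp br prod x y z i j + inner_swap prod br y x z i j)]].

Definition Hsubmodule (d : V -> V) (L : pred V) : Prop :=
  [/\ 0 \in L, (forall a x y, x \in L -> y \in L -> a *: x + y \in L) &
      (forall x, x \in L -> d x \in L)].

Definition lclosed (L : pred V) (br : V -> V -> seq V) : Prop :=
  forall a b n, a \in L -> b \in L -> coef (br a b) n \in L.

Definition conformal_module (d : V -> V) (L : pred V) (br act : V -> V -> seq V)
  : Prop :=
  [/\ (forall a b c u, a \in L -> b \in L ->
          peq (act (c *: a + b) u) (padd (pscale c (act a u)) (act b u))),
      (forall a c u v, a \in L ->
          peq (act a (c *: u + v)) (padd (pscale c (act a u)) (act a v))),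
      (forall a u, a \in L -> peq (act (d a) u) (popp (plam (act a u)))),
      (forall a u, a \in L -> peq (act a (d u)) (pdlam d (act a u))) &
      (forall a b u i j, a \in L -> b \in L ->
          inner act act a b u i j - inner_swap act act b a u i j
          = comp br act a b u i j)].

End Defs.

From Pilot Require Import Defs.
From HB Require Import structures.
From mathcomp Require Import all_boot all_order all_algebra.
Import GRing.Theory.
Set Implicit Arguments. Unset Strict Implicit.
Local Open Scope ring_scope.

(* Write l, m for lambda, mu and <a_l u> = [a_l u] + l (a_l u).  Linearity
   and sesquilinearity of the action follow coefficientwise from those of the two lambda-products.  For
   the Jacobi-type identity, expand <a_l <b_m u>> - <b_m <a_l u>> and
   <[a_l b]_{l+m} u> into bracket/bracket, l-, m- and lm-parts:
   - the bracket/bracket parts match by the Jacobi identity of [._.];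
   - the m-part of <a_l <b_m u>> is m [a_l (b_m u)], which the Leibniz rule
     turns into m ([a_l b]_{l+m} u) + m (b_m [a_l u]);
   - symmetrically l [b_m (a_l u)] = l ([b_m a]_{l+m} u) + l (a_l [b_m u]),
     and skew-symmetry gives ([b_m a]_{l+m} u) = -([a_l b]_{l+m} u);
   - the lm-parts (a_l (b_m u)) and (b_m (a_l u)) agree by associativity and
     commutativity of (._.).
   The key tool for the last two items is [comp_poly_subst_neg]: substituting
   -d-l for l in s, then forming (s_{l+m} u), swaps l and m. *)

Section ConformalModule.
Variable k : fieldType.
Variable V : lmodType k.
Implicit Types (s t q : seq V) (x y z u : V) (f : nat -> nat -> V).

Lemma coef_map (g : V -> V) s n : g 0 = 0 -> coef (map g s) n = g (coef s n).
Proof.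
move=> g0; rewrite /coef; case: (ltnP n (size s)) => hn.
  by rewrite (nth_map 0).
by rewrite !nth_default ?size_map.
Qed.

Lemma coef_padd s t n : coef (padd s t) n = coef s n + coef t n.
Proof.
rewrite /padd /coef; case: (ltnP n (maxn (size s) (size t))) => hn.
  by rewrite nth_mkseq.
rewrite nth_default ?size_mkseq //; move: hn; rewrite geq_max => /andP[hs ht].
by rewrite !nth_default // addr0.
Qed.

Lemma coef_pscale a s n : coef (pscale a s) n = a *: coef s n.
Proof. by rewrite coef_map ?scaler0. Qed.

Lemma coef_popp s n : coef (popp s) n = - coef s n.
Proof. by rewrite coef_map ?oppr0. Qed.

Lemma coef_plam0 s : coef (plam s) 0 = 0. Proof. by []. Qed.
Lemma coef_plamS s n : coef (plam s) n.+1 = coef s n. Proof. by []. Qed.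

Lemma coef_nil n : coef ([::] : seq V) n = 0.
Proof. by rewrite /coef nth_nil. Qed.

Definition mulL f i j : V := if i is i'.+1 then f i' j else 0.
Definition mulM f i j : V := if j is j'.+1 then f i j' else 0.

Lemma mulL0 f j : mulL f 0 j = 0. Proof. by []. Qed.
Lemma mulLS f i j : mulL f i.+1 j = f i j. Proof. by []. Qed.
Lemma mulM0 f i : mulM f i 0 = 0. Proof. by []. Qed.
Lemma mulMS f i j : mulM f i j.+1 = f i j. Proof. by []. Qed.

Lemma subst_sum_sym q i j : subst_sum q i j = subst_sum q j i.
Proof.
rewrite /subst_sum [(j + i)%N]addnC.
have e : 'C(i + j, (i + j) - i) = 'C(i + j, i) := bin_sub (leq_addr j i).
by rewrite addKn in e; rewrite e.
Qed.

(* (c l q)(l+m) = c (l + m) q(l+m): Pascal's rule on coefficients. *)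
Lemma subst_sum_plam q1 q2 (c : k) :
  (forall n, coef q2 n = c *: coef (plam q1) n) ->
  forall i j, subst_sum q2 i j
    = c *: (mulL (subst_sum q1) i j + mulM (subst_sum q1) i j).
Proof.
move=> h [|i] [|j]; rewrite /subst_sum h /mulL /mulM.
- by rewrite addn0 coef_plam0 addr0 !scaler0.
- by rewrite !add0n coef_plamS !bin0 !scale1r add0r.
- by rewrite !addn0 coef_plamS !binn !scale1r addr0.
- rewrite !addnS !addSn coef_plamS binS -scalerDl -natrD scalerA mulrC.
  by rewrite -scalerA addnC.
Qed.

(* The outer composition (s_{l+m} z) = sum_n l^n (s_n _{l+m} z) in V[l,m]
   of s in V[l] with z, for the lambda-product Q. *)
Definition comp_poly (Q : V -> V -> seq V) s z i j : V :=
  \sum_(n < i.+1) subst_sum (Q (coef s n) z) (i - n) j.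

Lemma sum_trunc (g : nat -> V) m N :
  (m <= N)%N -> (forall n, (m <= n)%N -> g n = 0) ->
  \sum_(n < N) g n = \sum_(n < m) g n.
Proof.
move=> + hg; elim: N => [|N IH]; first by rewrite leqn0 => /eqP ->.
rewrite leq_eqVlt => /orP[/eqP -> // | hlt].
by rewrite big_ord_recr /= IH // hg // addr0.
Qed.

Lemma compE (P Q : V -> V -> seq V) x y z i j :
  (forall n, coef (Q 0 z) n = 0) ->
  Defs.comp P Q x y z i j = comp_poly Q (P x y) z i j.
Proof.
move=> Q0z; rewrite /Defs.comp /comp_poly; set s := P x y.
pose g n := if (n <= i)%N then subst_sum (Q (coef s n) z) (i - n) j else 0.
have g_big n : (size s <= n)%N -> g n = 0.
  by move=> hn; rewrite /g /coef nth_default // /subst_sum [coef _ _]Q0z scaler0 if_same.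
have g_out n : (i.+1 <= n)%N -> g n = 0 by move=> hn; rewrite /g leqNgt hn.
rewrite -(@sum_trunc g _ _ (leq_maxl (size s) i.+1) g_big).
rewrite (@sum_trunc g _ _ (leq_maxr (size s) i.+1) g_out).
by apply: eq_bigr => -[n hn] _; rewrite /g /= -ltnS hn.
Qed.

Lemma comp_poly_padd_prod Q1 Q2 s z i j :
  comp_poly (fun x z => padd (Q1 x z) (Q2 x z)) s z i j
  = comp_poly Q1 s z i j + comp_poly Q2 s z i j.
Proof.
rewrite /comp_poly -big_split; apply: eq_bigr => n _.
by rewrite /subst_sum coef_padd scalerDr.
Qed.

Lemma comp_poly_plam_prod Q1 Q2 s z (c : k) :
  (forall x n, coef (Q2 x z) n = c *: coef (plam (Q1 x z)) n) ->
  forall i j, comp_poly Q2 s z i j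
    = c *: (mulL (comp_poly Q1 s z) i j + mulM (comp_poly Q1 s z) i j).
Proof.
move=> h i j; rewrite /comp_poly.
under eq_bigr do rewrite (@subst_sum_plam _ _ _ (h _)).
rewrite -scaler_sumr big_split /=; congr (_ *: (_ + _)).
- case: i => [|i] /=; first by rewrite big_ord1.
  rewrite big_ord_recr /= subnn addr0; apply: eq_bigr => -[n hn] _ /=.
  by rewrite subSn.
- by case: j => [|j] //=; rewrite big1.
Qed.

Variable d : V -> V.
Hypothesis Hd : Hmod d.

Lemma dD x y : d (x + y) = d x + d y.
Proof. by have := Hd 1 x y; rewrite !scale1r. Qed.

Lemma d0 : d 0 = 0.
Proof. by apply: (@addrI _ (d 0)); rewrite -dD !addr0. Qed.

Section LambdaProduct.
Variable Q : V -> V -> seq V.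
Hypothesis HQ : lambda_product d Q.

Lemma coefQDl x y z n : coef (Q (x + y) z) n = coef (Q x z) n + coef (Q y z) n.
Proof.
have [H1 _ _ _] := HQ.
by have := H1 1 x y z n; rewrite scale1r coef_padd coef_pscale scale1r.
Qed.

Lemma coefQDr x y z n : coef (Q z (x + y)) n = coef (Q z x) n + coef (Q z y) n.
Proof.
have [_ H2 _ _] := HQ.
by have := H2 1 x y z n; rewrite scale1r coef_padd coef_pscale scale1r.
Qed.

Lemma coefQ0l z n : coef (Q 0 z) n = 0.
Proof. by apply: (@addrI _ (coef (Q 0 z) n)); rewrite -coefQDl !addr0. Qed.

Lemma coefQ0r z n : coef (Q z 0) n = 0.
Proof. by apply: (@addrI _ (coef (Q z 0) n)); rewrite -coefQDr !addr0. Qed.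

Lemma coefQNl x z n : coef (Q (- x) z) n = - coef (Q x z) n.
Proof.
by apply: (@addrI _ (coef (Q x z) n)); rewrite -coefQDl !subrr coefQ0l.
Qed.

Lemma coefQdl x z n : coef (Q (d x) z) n = -1 *: coef (plam (Q x z)) n.
Proof. by have [_ _ H3 _] := HQ; rewrite H3 coef_popp scaleN1r. Qed.

Lemma coefQdr x y n :
  coef (Q x (d y)) n = d (coef (Q x y) n) + coef (plam (Q x y)) n.
Proof.
by have [_ _ _ H4] := HQ; rewrite H4 /pdlam coef_padd coef_map ?d0.
Qed.

Variable z : V.

Lemma comp_poly_peq s t : peq s t -> forall i j,
  comp_poly Q s z i j = comp_poly Q t z i j.
Proof. by move=> h i j; apply: eq_bigr => n _; rewrite h. Qed.

Lemma comp_poly_padd s t i j :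
  comp_poly Q (padd s t) z i j = comp_poly Q s z i j + comp_poly Q t z i j.
Proof.
rewrite /comp_poly -big_split; apply: eq_bigr => n _.
by rewrite coef_padd /subst_sum coefQDl scalerDr.
Qed.

Lemma comp_poly_popp s i j : comp_poly Q (popp s) z i j = - comp_poly Q s z i j.
Proof.
rewrite /comp_poly -sumrN; apply: eq_bigr => n _.
by rewrite coef_popp /subst_sum coefQNl scalerN.
Qed.

Lemma comp_poly_nil i j : comp_poly Q [::] z i j = 0.
Proof.
by rewrite /comp_poly big1 // => n _; rewrite coef_nil /subst_sum coefQ0l scaler0.
Qed.

Lemma comp_poly_cons c t i j :
  comp_poly Q (c :: t) z i j = subst_sum (Q c z) i j + mulL (comp_poly Q t z) i j.
Proof.
rewrite /comp_poly big_ord_recl subn0; congr (_ + _).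
case: i => [|i]; first by rewrite big_ord0.
by apply: eq_bigr => n _; rewrite subSS.
Qed.

Lemma comp_poly_plam s i j : comp_poly Q (plam s) z i j = mulL (comp_poly Q s z) i j.
Proof. by rewrite comp_poly_cons /subst_sum coefQ0l scaler0 add0r. Qed.

(* ((d s)_{l+m} z) = -(l + m) (s_{l+m} z), by sesquilinearity in the left slot. *)
Lemma comp_poly_mapd s i j :
  comp_poly Q (map d s) z i j
  = - (mulL (comp_poly Q s z) i j + mulM (comp_poly Q s z) i j).
Proof.
transitivity (comp_poly (fun x z => Q (d x) z) s z i j).
  by apply: eq_bigr => n _; rewrite coef_map ?d0.
by rewrite (@comp_poly_plam_prod Q _ s z (-1)) ?scaleN1r // => x n; apply: coefQdl.
Qed.

(* Key lemma: (t(-d-l)_{l+m} z) is (t(l)_{l+m} z) with l and m swapped,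
   since d acts as -(l+m) in the left slot; proved by induction along the
   Horner scheme defining [subst_neg]. *)
Lemma comp_poly_subst_neg t i j :
  comp_poly Q (subst_neg d t) z j i = comp_poly Q t z i j.
Proof.
elim: t i j => [|c t IH] i j; first by rewrite /= !comp_poly_nil.
rewrite [subst_neg d _]/= comp_poly_padd comp_poly_popp /pdlam comp_poly_padd.
rewrite comp_poly_mapd comp_poly_plam !comp_poly_cons.
have -> : mulL (comp_poly Q [::] z) j i = 0 by case: j => //= j; rewrite comp_poly_nil.
have -> : mulM (comp_poly Q (subst_neg d t) z) j i = mulL (comp_poly Q t z) i j.
  by case: i => //= i; rewrite IH.
by rewrite subst_sum_sym addr0 opprD opprK [mulL _ j i + _]addrC addrK.
Qed.

End LambdaProduct.

Section Action.
Variables (prod br : V -> V -> seq V).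
Hypothesis Hpc : poisson_conformal d prod br.

Lemma prod_lambda : lambda_product d prod. Proof. by case: Hpc. Qed.
Lemma br_lambda : lambda_product d br. Proof. by case: Hpc. Qed.

Definition act a u : seq V := padd (br a u) (plam (prod a u)).

Lemma coef_act a u n :
  coef (act a u) n = coef (br a u) n + coef (plam (prod a u)) n.
Proof. by rewrite /act coef_padd. Qed.

Lemma coef_actDr a x y n :
  coef (act a (x + y)) n = coef (act a x) n + coef (act a y) n.
Proof.
rewrite !coef_act (coefQDr br_lambda) addrACA; congr (_ + _).
by case: n => [|n]; rewrite ?addr0 // !coef_plamS (coefQDr prod_lambda).
Qed.

Lemma coef_act0l u n : coef (act 0 u) n = 0.
Proof.
rewrite coef_act (coefQ0l br_lambda) add0r.
by case: n => [|n] //; rewrite coef_plamS (coefQ0l prod_lambda).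
Qed.

Lemma inner_actE a b u i j : inner act act a b u i j =
  (inner br br a b u i j + mulL (inner prod br a b u) i j) +
  (mulM (inner br prod a b u) i j + mulL (mulM (inner prod prod a b u)) i j).
Proof.
rewrite /inner [coef (act b u) j]coef_act coef_actDr !coef_act.
by case: i => [|i]; case: j => [|j];
  rewrite ?coef_plam0 ?coef_plamS ?(coefQ0r br_lambda) ?(coefQ0r prod_lambda) ?addr0.
Qed.

Lemma inner_swap_actE a b u i j : inner_swap act act b a u i j =
  (inner_swap br br b a u i j + mulM (inner_swap prod br b a u) i j) +
  (mulL (inner_swap br prod b a u) i j + mulL (mulM (inner_swap prod prod b a u)) i j).
Proof.
rewrite /inner_swap [coef (act a u) i]coef_act coef_actDr !coef_act.
by case: i => [|i]; case: j => [|j];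
  rewrite ?coef_plam0 ?coef_plamS ?(coefQ0r br_lambda) ?(coefQ0r prod_lambda) ?addr0.
Qed.

Lemma comp_actE a b u i j : Defs.comp br act a b u i j =
  Defs.comp br br a b u i j + mulL (comp_poly prod (br a b) u) i j
  + mulM (comp_poly prod (br a b) u) i j.
Proof.
rewrite compE; last exact: coef_act0l.
rewrite [Defs.comp br br _ _ _ _ _]compE; last exact: (coefQ0l br_lambda).
rewrite (comp_poly_padd_prod br (fun x z => plam (prod x z))) -addrA.
rewrite (@comp_poly_plam_prod prod (fun x z => plam (prod x z)) (br a b) u 1) ?scale1r // => x n.
by rewrite scale1r.
Qed.

(* Abelian-group bookkeeping combining the four partial identities. *)
Lemma jacobi_regroup (A A' C0 X2 X3 X4 Y2 Y3 Y4 C1 C2 : V) :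
  A = C0 + A' -> X3 = C1 + Y2 -> Y3 = - C2 + X2 -> X4 = Y4 ->
  (A + X2) + (X3 + X4) - ((A' + Y2) + (Y3 + Y4)) = C0 + C2 + C1.
Proof.
move=> -> -> -> ->; rewrite !opprD !opprK !addrA.
by rewrite (ACl (1*9*4*2*7*3*10*5*8*6*11)) /= !addrK.
Qed.

(* m-part: [a_l (b_m u)] = ([a_l b]_{l+m} u) + (b_m [a_l u])  (Leibniz). *)
Lemma m_part a b u i j :
  inner br prod a b u i j
  = comp_poly prod (br a b) u i j + inner_swap prod br b a u i j.
Proof.
have [_ _ _ _ [_ Hleib]] := Hpc.
by rewrite Hleib compE //; apply: (coefQ0l prod_lambda).
Qed.

(* l-part: [b_m (a_l u)] = -([a_l b]_{l+m} u) + (a_l [b_m u])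
   (Leibniz, skew-symmetry and the swap lemma). *)
Lemma l_part a b u i j :
  inner_swap br prod b a u i j
  = - comp_poly prod (br a b) u i j + inner prod br a b u i j.
Proof.
have [_ _ _ [_ _ Hskew] [_ Hleib]] := Hpc.
rewrite /inner_swap -/(inner br prod b a u j i) Hleib compE; last first.
  exact: (coefQ0l prod_lambda).
rewrite (comp_poly_peq prod u (Hskew b a)) (comp_poly_popp prod_lambda).
by rewrite (comp_poly_subst_neg prod_lambda).
Qed.

(* lm-part: (a_l (b_m u)) = (b_m (a_l u))  (associativity and commutativity). *)
Lemma lm_part a b u i j : inner prod prod a b u i j = inner_swap prod prod b a u i j.
Proof.
have [_ _ _ [Hass Hcom _] _] := Hpc.
rewrite /inner_swap -/(inner prod prod b a u j i) !Hass.
rewrite !compE; try exact: (coefQ0l prod_lambda).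
by rewrite (comp_poly_peq prod u (Hcom b a)) (comp_poly_subst_neg prod_lambda).
Qed.

Lemma act_jacobi a b u i j :
  inner act act a b u i j - inner_swap act act b a u i j = Defs.comp br act a b u i j.
Proof.
have [_ _ _ _ [Hjac _]] := Hpc.
rewrite inner_actE inner_swap_actE comp_actE; apply: jacobi_regroup.
- by rewrite -Hjac subrK.
- by case: j => [|j]; rewrite ?mulM0 ?mulMS ?addr0 // m_part.
- by case: i => [|i]; rewrite ?mulL0 ?mulLS ?oppr0 ?addr0 // l_part.
- by case: i => [|i]; case: j => [|j]; rewrite ?mulL0 ?mulLS ?mulM0 ?mulMS // lm_part.
Qed.

Lemma act_conformal_module (L : pred V) : conformal_module d L br act.
Proof.
have [H1 H2 H3 H4] := br_lambda; have [P1 P2 P3 P4] := prod_lambda.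
split.
- move=> a b c u _ _ n; rewrite coef_padd coef_pscale !coef_act H1.
  rewrite !coef_padd coef_pscale.
  case: n => [|n]; rewrite ?coef_plamS ?P1 ?coef_padd ?coef_pscale ?scaler0 ?addr0 //.
  by rewrite scalerDr addrACA.
- move=> a c u v _ n; rewrite coef_padd coef_pscale !coef_act H2.
  rewrite !coef_padd coef_pscale.
  case: n => [|n]; rewrite ?coef_plamS ?P2 ?coef_padd ?coef_pscale ?scaler0 ?addr0 //.
  by rewrite scalerDr addrACA.
- move=> a u _ n; rewrite coef_popp coef_act (coefQdl br_lambda).
  case: n => [|n]; rewrite ?coef_plamS ?scaler0 ?oppr0 ?addr0 //.
  by rewrite coef_act (coefQdl prod_lambda) !scaleN1r opprD.
- move=> a u _ n; rewrite /pdlam coef_padd coef_map ?d0 // !coef_act (coefQdr br_lambda).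
  case: n => [|n]; rewrite ?coef_plamS ?addr0 //.
  by rewrite coef_act (coefQdr prod_lambda) dD addrACA.
- by move=> a b u i j _ _; apply: act_jacobi.
Qed.

End Action.
End ConformalModule.

(* The module structure uses only the Poisson conformal axioms. *)
Theorem mainTheorem5 (k : fieldType) (V : lmodType k)
  (d : V -> V) (prod br : V -> V -> seq V) (L : pred V) :
  [pchar k] =i pred0 ->
  poisson_conformal d prod br ->
  Hsubmodule d L ->
  lclosed L br ->
  conformal_module d L br (fun a u => padd (br a u) (plam (prod a u))).
Proof.
move=> _ Hpc _ _.
have Hd : Hmod d by case: Hpc.
exact: (act_conformal_module Hd Hpc L).
Qed.
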